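(* Let $(M,d)$ be a metric space, $\mathsf{P}\subseteq M$ a set of $n$ points, and $1\le\ell\le k\le n$ integers with $\ell\mid k$; put $m=k/\ell$. Let $Q=\{q_1,\dots,q_m\}$ be the output of Gonzalez's algorithm on $\mathsf{P}$ with $m$ centers, and let $C\subseteq\mathsf{P}$ with $|C|=k$ and $C\supseteq\bigcup_{i=1}^m N_{\mathsf{P}}(q_i,\ell)$. Then $\max_{p\in\mathsf{P}} d_C(p,\ell)\le 3\,r_{\mathrm{opt}}$, where $r_{\mathrm{opt}}=\min_{C'\subseteq\mathsf{P},|C'|=k}\max_{p\in\mathsf{P}} d_{C'}(p,\ell)$.
   Context: Gonzalez's algorithm with $m$ centers: $q_1\in\mathsf{P}$ is arbitrary, and for $i=2,\dots,m$, $q_i$ is a point of $\mathsf{P}$ maximizing $d(p,\{q_1,\dots,q_{i-1}\})$ over $p\in\mathsf{P}$. For a finite $S\subseteq M$ and $1\le i\le|S|$, $d_S(p,i)$ is the radius of the smallest closed ball centered at $p$ containing at least $i$ points of $S$; nearest neighbors are ordered lexicographically by $(d(p,s),\text{index of }s)$ and $N_S(p,i)$ is the set of the first $i$ points of $S$ in this order, $|N_S(p,i)|=i$. *)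

From HB Require Import structures.
From mathcomp Require Import all_boot all_order all_algebra.
Set Implicit Arguments. Unset Strict Implicit. Unset Printing Implicit Defensive.
Import Order.TTheory GRing.Theory Num.Theory.
Local Open Scope ring_scope.

(* The point set P is given as an injective map P : 'I_n -> M; the "index"
   of a point P s is s.  Subsets of P are sets of indices {set 'I_n}. *)

Definition is_metric (R : realFieldType) (M : Type) (d : M -> M -> R) : Prop :=
  [/\ forall x y, 0 <= d x y,
      forall x y, d x y = 0 <-> x = y,
      forall x y, d x y = d y x
    & forall x y z, d x z <= d x y + d y z].

Definition ball_count (R : realFieldType) (M : Type) (d : M -> M -> R)
  (n : nat) (P : 'I_n -> M) (S : {set 'I_n}) (x : M) (r : R) : nat :=
  #|[set t in S | d x (P t) <= r]|.

(* d_S(x,i): radius of the smallest closed ball centred at x containing at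
   least i points of S.  The smallest such radius is always one of the
   distances d x s (s in S), so it is the minimum of those distances r for
   which the ball of radius r contains >= i points of S.  The default value
   (max distance to S) is itself such a candidate when i <= #|S|. *)
Definition dS (R : realFieldType) (M : Type) (d : M -> M -> R)
  (n : nat) (P : 'I_n -> M) (S : {set 'I_n}) (x : M) (i : nat) : R :=
  \big[Num.min/ \big[Num.max/0]_(s in S) d x (P s)]_(s in S |
      (i <= ball_count d P S x (d x (P s)))%N) d x (P s).

Definition nn_lt (R : realFieldType) (M : Type) (d : M -> M -> R)
  (n : nat) (P : 'I_n -> M) (x : M) (t s : 'I_n) : bool :=
  (d x (P t) < d x (P s)) || ((d x (P t) == d x (P s)) && (t < s)%N).

(* N_S(x,i): the first i points of S in the above order. *)
Definition NN (R : realFieldType) (M : Type) (d : M -> M -> R)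
  (n : nat) (P : 'I_n -> M) (S : {set 'I_n}) (x : M) (i : nat) : {set 'I_n} :=
  [set s in S | (#|[set t in S | nn_lt d P x t s]| < i)%N].

(* d(x, {q_0, ..., q_{i-1}}) for i >= 1 (the default value d x (q 0) is one
   of the terms of the min, so it is harmless). *)
Definition dist_prefix (R : realFieldType) (M : Type) (d : M -> M -> R)
  (n : nat) (P : 'I_n -> M) (q : nat -> 'I_n) (i : nat) (x : M) : R :=
  \big[Num.min/ d x (P (q 0%N))]_(j < i) d x (P (q j)).

(* q_0, ..., q_{m-1} (0-based) is a possible run of Gonzalez's algorithm with
   m centers: q_0 arbitrary, q_i maximises d(p, {q_0..q_{i-1}}) over P. *)
Definition is_gonzalez (R : realFieldType) (M : Type) (d : M -> M -> R)
  (n : nat) (P : 'I_n -> M) (m : nat) (q : nat -> 'I_n) : Prop :=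
  forall i : nat, (0 < i < m)%N ->
    forall p : 'I_n, dist_prefix d P q i (P p) <= dist_prefix d P q i (P (q i)).

Definition cover_cost (R : realFieldType) (M : Type) (d : M -> M -> R)
  (n : nat) (P : 'I_n -> M) (C : {set 'I_n}) (l : nat) : R :=
  \big[Num.max/0]_(p : 'I_n) dS d P C (P p) l.

From HB Require Import structures.
From mathcomp Require Import all_boot all_order all_algebra.
From mathcomp Require Import lra zify.
Set Implicit Arguments. Unset Strict Implicit.
Import Order.TTheory GRing.Theory Num.Theory.
Local Open Scope ring_scope.

(* Let r = cover_cost C' l for an arbitrary k-subset C', so that the
   closed r-ball around every point of P holds at least l points of C'.

   - If a point p lies within 2r of some center q_j, the l nearest neighbours
     N(q_j, l) of q_j (all contained in C) lie within r of q_j, hence within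
     3r of p, and d_C(p, l) <= 3r.
   - Otherwise the m centers together with p form m + 1 points at pairwise
     distance > 2r (for the centers this is the greedy choice of Gonzalez's
     algorithm); their r-balls are disjoint and each holds l points of C',
     so #|C'| >= (m + 1) l > k, a contradiction. *)

(* For a strict order lt on a finite type and i <= #|S|, the elements of S
   with fewer than i predecessors in S (the "first i elements") number at
   least i: otherwise a minimal element outside them would have all its
   predecessors among them. *)
Lemma card_initial_segment (T : finType) (lt : rel T) (S : {set T}) (i : nat) :
  (forall a b c, lt a b -> lt b c -> lt a c) -> (forall a, ~~ lt a a) ->
  (i <= #|S|)%N -> (i <= #|[set s in S | #|[set t in S | lt t s]| < i]|)%N.
Proof.
move=> lt_trans lt_irr iS; set N := [set s in S | _].
rewrite leqNgt; apply/negP => Nsmall.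
have [s0 s0SN] : exists s0, s0 \in S :\: N.
  apply/set0Pn; rewrite -card_gt0 cardsD.
  rewrite subn_gt0 (leq_ltn_trans _ (leq_trans Nsmall iS)) //.
  by rewrite subset_leq_card ?subsetIr.
(* an lt-minimal element s of S :\: N has all its predecessors in N *)
have [s sSN smin] := arg_minnP (fun s => #|[set t in S :\: N | lt t s]|) s0SN.
have pred_in_N : [set t in S | lt t s] \subset N.
  apply/subsetP => t; rewrite inE => /andP[tS ts]; apply: contraT => tN.
  have tSN : t \in S :\: N by rewrite inE tN.
  suff : (#|[set u in S :\: N | lt u t]| < #|[set u in S :\: N | lt u s]|)%N.
    by rewrite ltnNge smin.
  apply: proper_card; apply/properP; split.
    by apply/subsetP => u; rewrite !inE => /andP[-> ut]; rewrite (lt_trans _ _ _ ut ts).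
  exists t; first by rewrite inE tSN.
  by rewrite inE (negbTE (lt_irr t)) andbF.
case/setDP: sSN => sS /negP; apply.
by rewrite inE sS (leq_ltn_trans (subset_leq_card pred_in_N)).
Qed.

Section Balls.
Variables (R : realFieldType) (M : Type) (d : M -> M -> R) (n : nat) (P : 'I_n -> M).

Lemma ball_count_mono (S S' : {set 'I_n}) x r r' :
  S \subset S' -> r <= r' -> (ball_count d P S x r <= ball_count d P S' x r')%N.
Proof.
move=> SS' rr'; apply: subset_leq_card; apply/subsetP => t.
by rewrite !inE => /andP[/(subsetP SS') -> /le_trans->].
Qed.

Lemma ball_count_dS (S : {set 'I_n}) x i : (i <= #|S|)%N ->
  (i <= ball_count d P S x (dS d P S x i))%N.
Proof.
move=> iS; rewrite /dS.
apply: (big_ind (fun v => (i <= ball_count d P S x v)%N)) => //.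
- apply: (leq_trans iS); apply: subset_leq_card; apply/subsetP => t tS.
  by rewrite inE tS le_bigmax_cond.
- by move=> a b ha hb; rewrite minEle; case: ifP.
- by move=> s /andP[].
Qed.

(* d_S(x, i) is at most any radius whose ball holds i points of S: the
   farthest point of S inside that ball is one of the candidate radii. *)
Lemma dS_le_radius (S : {set 'I_n}) x i r : (1 <= i)%N ->
  (i <= ball_count d P S x r)%N -> dS d P S x i <= r.
Proof.
move=> i1 iball; set B := [set t in S | d x (P t) <= r] in iball.
have [s0 s0B] : exists s0, s0 \in B by apply/card_gt0P/(leq_trans i1).
case: (arg_maxP (fun t => d x (P t)) s0B) => s sB smax.
have /setIdP[sS sr] : s \in B := sB.
apply: le_trans sr; apply: bigmin_le_cond; rewrite sS /=.
apply: (leq_trans iball); apply: subset_leq_card; apply/subsetP => t tB.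
by case/setIdP: (tB) => tS _; rewrite inE tS; apply: smax.
Qed.

Lemma nn_lt_trans x : forall a b c,
  nn_lt d P x a b -> nn_lt d P x b c -> nn_lt d P x a c.
Proof.
move=> a b c; rewrite /nn_lt => /orP[h1|/andP[/eqP e1 h1]] /orP[h2|/andP[/eqP e2 h2]].
- by rewrite (lt_trans h1 h2).
- by rewrite -e2 h1.
- by rewrite e1 h2.
- by rewrite e1 e2 eqxx (ltn_trans h1 h2) orbT.
Qed.

Lemma nn_lt_irr x a : ~~ nn_lt d P x a a.
Proof. by rewrite /nn_lt ltxx ltnn andbF. Qed.

Lemma card_NN (S : {set 'I_n}) x i : (i <= #|S|)%N -> (i <= #|NN d P S x i|)%N.
Proof. exact: card_initial_segment (@nn_lt_trans x) (@nn_lt_irr x). Qed.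

(* If the r-ball around x holds i points of S, then N_S(x, i) lies inside
   it: a farther point would be preceded by all i points of the ball. *)
Lemma NN_sub_ball (S : {set 'I_n}) x i r : (i <= ball_count d P S x r)%N ->
  NN d P S x i \subset [set t in S | d x (P t) <= r].
Proof.
move=> iball; apply/subsetP => t; rewrite !inE => /andP[tS tN]; rewrite tS /=.
rewrite leNgt; apply/negP => far; move: tN; rewrite ltnNge => /negP; apply.
apply: (leq_trans iball); apply: subset_leq_card; apply/subsetP => u.
by rewrite !inE => /andP[-> u_near]; rewrite /nn_lt (le_lt_trans u_near far).
Qed.

Lemma ball_count_cover_cost (S : {set 'I_n}) l p : (l <= #|S|)%N ->
  (l <= ball_count d P S (P p) (cover_cost d P S l))%N.
Proof.
move=> lS; apply: leq_trans (ball_count_dS (P p) lS) _.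
by apply: ball_count_mono => //; apply: le_bigmax.
Qed.

Lemma cover_cost_ge0 (S : {set 'I_n}) l : 0 <= cover_cost d P S l.
Proof. exact: bigmax_ge_id. Qed.

Lemma cover_cost_le (S : {set 'I_n}) l b :
  0 <= b -> (forall p, dS d P S (P p) l <= b) -> cover_cost d P S l <= b.
Proof. by move=> b0 hb; apply: bigmax_le. Qed.

Hypothesis hd : is_metric d.

(* Packing: j points at pairwise distance > 2r have disjoint r-balls, so if
   each of these balls holds l points of S then S has at least j * l points. *)
Lemma packing (S : {set 'I_n}) (r : R) (l j : nat) (y : nat -> M) :
  (forall i i', (i < i' < j)%N -> 2%:R * r < d (y i) (y i')) ->
  (forall i, (i < j)%N -> (l <= ball_count d P S (y i) r)%N) ->
  (j * l <= #|S|)%N.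
Proof.
case: hd => _ _ dsym dtri sep full.
pose B i := [set t in S | d (y i) (P t) <= r].
suff : (j * l <= #|\bigcup_(i < j) B i|)%N.
  move/leq_trans; apply; apply: subset_leq_card.
  by apply/bigcupsP => i _; apply/subsetP => t; rewrite inE => /andP[].
elim: j sep full => [|j IH] sep full; first by rewrite mul0n.
have disjoint_j : (\bigcup_(i < j) B i) :&: B j = set0.
  apply/setP => t; rewrite inE in_set0; apply/negP => /andP[/bigcupP[i _]].
  rewrite !inE => /andP[_ near_i] /andP[_ near_j].
  have := sep i j; rewrite ltn_ord leqnn => /(_ isT).
  have := dtri (y i) (P t) (y j); rewrite (dsym (P t) (y j)); lra.
rewrite big_ord_recr /= cardsU disjoint_j cards0 subn0 mulSnr.
apply: leq_add; last exact: full.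
apply: IH => [i i' /andP[ii' i'j]|i ij]; first by apply: sep; rewrite ii' ltnW.
exact: full (ltnW ij).
Qed.

(* Gonzalez's centers are pairwise farther apart than any distance by which a
   point p is separated from all of them: q_j maximises the distance to the
   previous centers, and p realises a distance > rho. *)
Lemma gonzalez_separated (m : nat) (q : nat -> 'I_n) (p : 'I_n) (rho : R) :
  is_gonzalez d P m q -> (forall j, (j < m)%N -> rho < d (P p) (P (q j))) ->
  forall i j, (i < j < m)%N -> rho < d (P (q i)) (P (q j)).
Proof.
case: hd => _ _ dsym _ greedy far i j /andP[ij jm].
have p_far : rho < dist_prefix d P q j (P p).
  by apply: lt_bigmin => [|k _]; apply: far; [lia | exact: ltn_trans (ltn_ord k) jm].
have qj_near : dist_prefix d P q j (P (q j)) <= d (P (q j)) (P (q i)).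
  exact: (bigmin_le _ (Ordinal ij)).
rewrite dsym; apply: lt_le_trans p_far (le_trans _ qj_near).
by apply: greedy; lia.
Qed.

Lemma far_point_packing (S : {set 'I_n}) (r : R) (l m : nat) (q : nat -> 'I_n)
  (p : 'I_n) :
  is_gonzalez d P m q -> (forall x, (l <= ball_count d P S (P x) r)%N) ->
  (forall j, (j < m)%N -> 2%:R * r < d (P p) (P (q j))) ->
  (m.+1 * l <= #|S|)%N.
Proof.
move=> greedy full far; have dsym : forall x y, d x y = d y x by case: hd.
pose y i := if (i < m)%N then P (q i) else P p.
apply: (packing (j := m.+1) (y := y)) => [i i' /andP[ii' i'm]|i _]; last first.
  by rewrite /y; case: ifP => _; apply: full.
have im : (i < m)%N by apply: leq_trans ii' i'm.
rewrite /y im; case: ltnP => [i'm'|_]; last by rewrite dsym; apply: far.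
by apply: (gonzalez_separated greedy far); rewrite ii'.
Qed.

Lemma near_center_dS (C S : {set 'I_n}) (l : nat) (r : R) (x : M) (p : 'I_n) :
  (1 <= l)%N -> (l <= n)%N -> NN d P [set: 'I_n] x l \subset C ->
  (l <= ball_count d P S x r)%N -> d (P p) x <= 2%:R * r ->
  dS d P C (P p) l <= 3%:R * r.
Proof.
case: hd => _ _ _ dtri l1 ln NC xball px.
have NN_near : NN d P [set: 'I_n] x l \subset [set t in [set: 'I_n] | d x (P t) <= r].
  by apply/NN_sub_ball/(leq_trans xball)/ball_count_mono; rewrite ?subsetT.
apply: dS_le_radius => //.
apply: leq_trans (@card_NN [set: 'I_n] x l _) _; first by rewrite cardsT card_ord.
apply: subset_leq_card; apply/subsetP => t tN; rewrite inE (subsetP NC _ tN) /=.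
move/subsetP/(_ t tN): NN_near; rewrite inE => /andP[_ xt].
have := dtri (P p) x (P t); lra.
Qed.

End Balls.

Theorem mainTheorem11 (R : realFieldType) (M : Type) (d : M -> M -> R)
  (hd : is_metric d) (n : nat) (P : 'I_n -> M) (hP : injective P)
  (l k : nat) (hl : (1 <= l)%N) (hlk : (l <= k)%N) (hkn : (k <= n)%N)
  (hdiv : (l %| k)%N)
  (q : nat -> 'I_n) (hq : is_gonzalez d P (k %/ l) q)
  (C : {set 'I_n}) (hC : #|C| = k)
  (hCN : forall j : nat, (j < k %/ l)%N -> NN d P [set: 'I_n] (P (q j)) l \subset C) :
  forall C' : {set 'I_n}, #|C'| = k ->
    cover_cost d P C l <= 3%:R * cover_cost d P C' l.
Proof.
move=> C' hC'; set m := (k %/ l)%N in hq hCN; set r := cover_cost d P C' l.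
have C'balls : forall x, (l <= ball_count d P C' (P x) r)%N.
  by move=> x; apply: ball_count_cover_cost; rewrite hC'.
apply: cover_cost_le => [|p]; first by rewrite mulr_ge0 ?ler0n ?cover_cost_ge0.
case: (boolP [exists j : 'I_m, d (P p) (P (q j)) <= 2%:R * r]) =>
  [/existsP[j near_j]|all_far].
-
  exact: (near_center_dS hd hl (leq_trans hlk hkn) (hCN j (ltn_ord j))
            (C'balls (q j)) near_j).
- (* p is far from all centers: (m + 1) l <= #|C'| = m l, impossible *)
  exfalso; have : (m.+1 * l <= #|C'|)%N.
    apply: (far_point_packing (p := p) hd hq C'balls) => j jm.
    by move: all_far; rewrite negb_exists => /forallP/(_ (Ordinal jm)); rewrite -ltNge.
  by rewrite hC' -{1}(divnK hdiv) mulSn; lia.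
Qed.
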